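(* Let $\mathbf G=(G,\le,\cdot,/,0,1)$ be a left-residuated po-groupoid satisfying the double negation law $\neg\neg x=x$ and the equation $(x\to y)\to y=(y\to x)\to x$ for all $x,y\in G$. Then $(G,\le)$ is a join-semilattice in which $x\vee y=(x\to y)\to y$ for all $x,y$. Moreover, for every $a\in G$, the map $\gamma_a\colon[a)\to[a)$, $\gamma_a(x)=x\to a$, is a well-defined antitone involution on the principal filter $[a)=\{x\in G: a\le x\}$ (i.e. $x\le y$ implies $\gamma_a(y)\le\gamma_a(x)$, and $\gamma_a(\gamma_a(x))=x$).
   Context: A (bounded integral) left-residuated po-groupoid is a structure $\mathbf G=(G,\le,\cdot,/,0,1)$ where $(G,\le,0,1)$ is a bounded poset with least element $0$ and greatest element $1$, $\cdot$ is a binary operation on $G$ with $1\cdot x=x\cdot 1=x$ for all $x$ (no associativity, commutativity or monotonicity is assumed), and $/$ is a binary operation on $G$ satisfying the left residuation law: for all $x,y,z\in G$, $x\cdot y\le z\iff x\le z/y$. The negation is defined by $\neg x:=0/x$ and the implication by $x\to y:=\neg x/\neg y$. *)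

Record LRPOG := {
  car :> Type;
  le : car -> car -> Prop;
  mul : car -> car -> car;
  rdiv : car -> car -> car;
  zero : car;
  one : car;
  le_refl : forall x, le x x;
  le_antisym : forall x y, le x y -> le y x -> x = y;
  le_trans : forall x y z, le x y -> le y z -> le x z;
  zero_least : forall x, le zero x;
  one_greatest : forall x, le x one;
  mul_1l : forall x, mul one x = x;
  mul_1r : forall x, mul x one = x;
  residuation : forall x y z, le (mul x y) z <-> le x (rdiv z y)
}.

Definition neg (G : LRPOG) (x : G) : G := rdiv G (zero G) x.
Definition impl (G : LRPOG) (x y : G) : G := rdiv G (neg G x) (neg G y).

Definition is_join (G : LRPOG) (x y j : G) : Prop :=
  le G x j /\ le G y j /\ (forall z, le G x z -> le G y z -> le G j z).


(* Applied to ~y and ~x, the commutation law rewrites ~x as ~(x / y) / y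
   whenever x <= y, and since ~y * y = 0 this gives ~y <= ~x.  Moreover 1 -> y = y and x <= y forces
   x -> y = 1, so the commutation law turns (x -> a) -> a into
   (a -> x) -> x = 1 -> x = x for a <= x.  The join property follows:
   (x -> y) -> y is an upper bound of x and y because it is symmetric and
   above y, and for any common upper bound z it lies below
   (z -> y) -> y = z. *)

Section Residuation.

Variable G : LRPOG.

Lemma rdiv_le_mono_l (y z z' : G) :
  le G z z' -> le G (rdiv G z y) (rdiv G z' y).
Proof.
  intros Hzz'. apply residuation. apply le_trans with z; [|exact Hzz'].
  apply residuation, le_refl.
Qed.

Lemma rdiv_eq_one_iff_le (y z : G) : le G y z <-> rdiv G z y = one G.
Proof.
  split; intros H.
  - apply le_antisym; [apply one_greatest|].
    apply residuation. rewrite mul_1l. exact H.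
  - rewrite <- (mul_1l G y). apply residuation. rewrite H. apply le_refl.
Qed.

Lemma mul_neg_l (y : G) : mul G (neg G y) y = zero G.
Proof. apply le_antisym; [|apply zero_least]. apply residuation, le_refl. Qed.

Lemma rdiv_one_r (z : G) : rdiv G z (one G) = z.
Proof.
  apply le_antisym.
  - rewrite <- (mul_1r G (rdiv G z (one G))). apply residuation, le_refl.
  - apply residuation. rewrite mul_1r. apply le_refl.
Qed.

Lemma neg_one : neg G (one G) = zero G.
Proof. apply rdiv_one_r. Qed.

End Residuation.

Section Involutive.

Variable G : LRPOG.
Hypothesis dneg : forall x : G, neg G (neg G x) = x.

Lemma impl_one_l (y : G) : impl G (one G) y = y.
Proof. unfold impl. rewrite neg_one. apply dneg. Qed.

Hypothesis hcomm : forall x y : G, impl G (impl G x y) y = impl G (impl G y x) x.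

Lemma neg_antitone (x y : G) : le G x y -> le G (neg G y) (neg G x).
Proof.
  intros Hxy. apply rdiv_eq_one_iff_le in Hxy.
  assert (Hnegx : neg G x = rdiv G (neg G (rdiv G x y)) y).
  { pose proof (hcomm (neg G y) (neg G x)) as E.
    unfold impl at 2 in E. rewrite !dneg, Hxy, impl_one_l in E.
    unfold impl at 2 in E. rewrite !dneg in E.
    rewrite E. unfold impl. rewrite dneg. reflexivity. }
  rewrite Hnegx. apply residuation. rewrite mul_neg_l. apply zero_least.
Qed.

Lemma impl_antitone_l (a x y : G) :
  le G x y -> le G (impl G y a) (impl G x a).
Proof. intros Hxy. apply rdiv_le_mono_l, neg_antitone, Hxy. Qed.

Lemma impl_eq_one_of_le (x y : G) : le G x y -> impl G x y = one G.
Proof. intros Hxy. apply rdiv_eq_one_iff_le, neg_antitone, Hxy. Qed.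

Lemma le_impl_r (x y : G) : le G y (impl G x y).
Proof.
  eapply le_trans; [|apply impl_antitone_l, one_greatest].
  rewrite impl_one_l. apply le_refl.
Qed.

Lemma impl_impl_of_le (a x : G) : le G a x -> impl G (impl G x a) a = x.
Proof. intros Hax. rewrite hcomm, (impl_eq_one_of_le a x Hax). apply impl_one_l. Qed.

Lemma is_join_impl_impl (x y : G) : is_join G x y (impl G (impl G x y) y).
Proof.
  repeat split.
  - rewrite hcomm. apply le_impl_r.
  - apply le_impl_r.
  - intros z Hxz Hyz. rewrite <- (impl_impl_of_le y z Hyz).
    apply impl_antitone_l, impl_antitone_l, Hxz.
Qed.

End Involutive.

Theorem lemma4 (G : LRPOG)
  (dneg : forall x : G, neg G (neg G x) = x)
  (hcomm : forall x y : G, impl G (impl G x y) y = impl G (impl G y x) x) :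
  (forall x y : G, is_join G x y (impl G (impl G x y) y)) /\
  (forall a : G,
     (forall x : G, le G a x -> le G a (impl G x a)) /\
     (forall x y : G, le G a x -> le G a y -> le G x y ->
        le G (impl G y a) (impl G x a)) /\
     (forall x : G, le G a x -> impl G (impl G x a) a = x)).
Proof.
  split.
  - exact (is_join_impl_impl G dneg hcomm).
  - intros a. repeat split.
    + intros x _. exact (le_impl_r G dneg hcomm x a).
    + intros x y _ _ Hxy. exact (impl_antitone_l G dneg hcomm a x y Hxy).
    + exact (impl_impl_of_le G dneg hcomm a).
Qed.
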